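(* Let $\mathbf{A}=(a_{ij})$ be an $m\times n$ binary array (each entry is $0$ or $1$) with row set $R$ and column set $C$, and assume no row and no column of $\mathbf{A}$ consists only of zeros. For $X\subset R$ and $Y\subset C$ define \[ V(X)=\sum_{i\in X}\sum_{j\in C}a_{ij},\qquad V(Y)=\sum_{i\in R}\sum_{j\in Y}a_{ij},\qquad a(X,Y)=\sum_{i\in X}\sum_{j\in Y}a_{ij}, \] and for nonempty $X\subset R$, $Y\subset C$ define $d(X,Y)=\dfrac{a(X,Y)}{V(X)\,V(Y)}$. Let $0<\delta<\frac14$, let $X\subset R$ and $Y\subset C$ be nonempty, and let $X^*\subset X$ and $Y^*\subset Y$ satisfy $\frac{V(X^* )}{V(X)}\ge 1-\delta$ and $\frac{V(Y^* )}{V(Y)}\ge 1-\delta$. Then \[ |d(X,Y)-d(X^*,Y^* )|\le 4\delta . \] *)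

(* Binary m x n array as a boolean matrix; a_ij = nat_of_bool (A i j). *)
From HB Require Import structures.
From mathcomp Require Import all_boot all_order all_algebra.
Set Implicit Arguments. Unset Strict Implicit. Unset Printing Implicit Defensive.
Import Order.TTheory GRing.Theory Num.Theory.

Definition aent (m n : nat) (A : 'M[bool]_(m, n)) (i : 'I_m) (j : 'I_n) : nat :=
  nat_of_bool (A i j).

Definition Vrow (m n : nat) (A : 'M[bool]_(m, n)) (X : {set 'I_m}) : nat :=
  \sum_(i in X) \sum_(j < n) aent A i j.

Definition Vcol (m n : nat) (A : 'M[bool]_(m, n)) (Y : {set 'I_n}) : nat :=
  \sum_(i < m) \sum_(j in Y) aent A i j.

Definition aXY (m n : nat) (A : 'M[bool]_(m, n)) (X : {set 'I_m}) (Y : {set 'I_n}) : nat :=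
  \sum_(i in X) \sum_(j in Y) aent A i j.

Definition dens (R : realFieldType) (m n : nat) (A : 'M[bool]_(m, n))
    (X : {set 'I_m}) (Y : {set 'I_n}) : R :=
  ((aXY A X Y)%:R / ((Vrow A X)%:R * (Vcol A Y)%:R))%R.

From HB Require Import structures.
From mathcomp Require Import all_boot all_order all_algebra.
From mathcomp Require Import ring lra.
Import Order.TTheory GRing.Theory Num.Theory.
Set Implicit Arguments. Unset Strict Implicit. Unset Printing Implicit Defensive.

(* Write x, y, a for V(X), V(Y), a(X,Y) and x', y', a' for V(Xs), V(Ys), a(Xs,Ys).
   Splitting X along Xs and Y along Ys gives a' <= a <= a' + (x - x') + (y - y'), and
   a' <= x' y'.  Then d(X,Y) - d(Xs,Ys) <= (a - a') / (x y) <= delta / y + delta / x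
   <= 2 delta, while d(Xs,Ys) - d(X,Y) <= d(Xs,Ys) (1 - x' y' / (x y)) <= 1 - (1 - delta)^2
   <= 2 delta; so the bound already holds with 2 delta. *)

Lemma leq_sum_in (I : finType) (P : {pred I}) (F : I -> nat) :
  (\sum_(i in P) F i <= \sum_i F i)%N.
Proof. by rewrite [X in (_ <= X)%N](bigID [in P]) leq_addr. Qed.

Lemma big_setD_subset (R : Type) (idx : R) (op : Monoid.com_law idx)
    (I : finType) (P Q : {set I}) (F : I -> R) :
  Q \subset P ->
  \big[op/idx]_(i in P) F i =
    op (\big[op/idx]_(i in Q) F i) (\big[op/idx]_(i in P :\: Q) F i).
Proof. by move=> /setIidPr QP; rewrite (big_setID Q) QP. Qed.

Section BinaryArray.
Variables (m n : nat) (A : 'M[bool]_(m, n)).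

Lemma Vrow_setD (X Xs : {set 'I_m}) :
  Xs \subset X -> Vrow A X = (Vrow A Xs + Vrow A (X :\: Xs))%N.
Proof. exact: big_setD_subset. Qed.

Lemma Vcol_setD (Y Ys : {set 'I_n}) :
  Ys \subset Y -> Vcol A Y = (Vcol A Ys + Vcol A (Y :\: Ys))%N.
Proof.
by move=> YsY; rewrite /Vcol -big_split; apply: eq_bigr => i _; apply: big_setD_subset.
Qed.

Lemma aXY_le_Vrow (X : {set 'I_m}) (Y : {set 'I_n}) : (aXY A X Y <= Vrow A X)%N.
Proof. by apply: leq_sum => i _; apply: leq_sum_in. Qed.

Lemma aXY_le_Vcol (X : {set 'I_m}) (Y : {set 'I_n}) : (aXY A X Y <= Vcol A Y)%N.
Proof. exact: leq_sum_in. Qed.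

Lemma aXY_le_mulV (X : {set 'I_m}) (Y : {set 'I_n}) :
  (aXY A X Y <= Vrow A X * Vcol A Y)%N.
Proof.
case: (posnP (Vcol A Y)) => [VY0 | VY_gt0].
  by have := aXY_le_Vcol X Y; rewrite VY0 muln0.
exact: leq_trans (aXY_le_Vrow X Y) (leq_pmulr _ VY_gt0).
Qed.

Lemma aXY_setD (X Xs : {set 'I_m}) (Y Ys : {set 'I_n}) :
  Xs \subset X -> Ys \subset Y ->
  aXY A X Y = (aXY A Xs Ys + aXY A Xs (Y :\: Ys) + aXY A (X :\: Xs) Y)%N.
Proof.
move=> XsX YsY; rewrite /aXY (big_setD_subset _ _ XsX) -big_split.
by congr (_ + _)%N; apply: eq_bigr => i _; apply: big_setD_subset.
Qed.

Lemma aXY_subset (X Xs : {set 'I_m}) (Y Ys : {set 'I_n}) :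
  Xs \subset X -> Ys \subset Y -> (aXY A Xs Ys <= aXY A X Y)%N.
Proof. by move=> XsX YsY; rewrite (aXY_setD XsX YsY) -addnA leq_addr. Qed.

Lemma aXY_le_setD (X Xs : {set 'I_m}) (Y Ys : {set 'I_n}) :
  Xs \subset X -> Ys \subset Y ->
  (aXY A X Y <= aXY A Xs Ys + Vcol A (Y :\: Ys) + Vrow A (X :\: Xs))%N.
Proof.
move=> XsX YsY; rewrite (aXY_setD XsX YsY).
by rewrite !leq_add ?aXY_le_Vcol ?aXY_le_Vrow.
Qed.

Lemma Vrow_gt0 (X : {set 'I_m}) :
  (forall i, exists j, A i j) -> X != set0 -> (0 < Vrow A X)%N.
Proof.
move=> no_zero_row /set0Pn [i iX]; have [j Aij] := no_zero_row i.
by rewrite /Vrow (bigD1 i) //= (bigD1 j) //= /aent Aij.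
Qed.

Lemma Vcol_gt0 (Y : {set 'I_n}) :
  (forall j, exists i, A i j) -> Y != set0 -> (0 < Vcol A Y)%N.
Proof.
move=> no_zero_col /set0Pn [j jY]; have [i Aij] := no_zero_col j.
by rewrite /Vcol (bigD1 i) //= (bigD1 j) //= /aent Aij.
Qed.

End BinaryArray.

Local Open Scope ring_scope.

Lemma density_drop_le (R : realFieldType) (d x y x' y' a a' : R) :
  1 <= x -> 1 <= y -> 0 < x' <= x -> 0 < y' <= y -> 0 <= d -> 0 <= a' ->
  a <= a' + d * x + d * y ->
  a / (x * y) - a' / (x' * y') <= 2 * d.
Proof.
move=> x_ge1 y_ge1 /andP[x'_gt0 x'_le] /andP[y'_gt0 y'_le] d_ge0 a'_ge0 a_le.
have xy_gt0 : 0 < x * y by apply: mulr_gt0; lra.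
have x'y'_gt0 : 0 < x' * y' by apply: mulr_gt0.
have shrink : a' / (x * y) <= a' / (x' * y').
  rewrite ler_wpM2l // lef_pV2 ?posrE //; apply: ler_pM; lra.
have defect : (a - a') / (x * y) <= d / y + d / x.
  have -> : d / y + d / x = (d * x + d * y) / (x * y).
    by field; apply/andP; split; rewrite gt_eqF //; lra.
  by rewrite ler_pM2r ?invr_gt0 //; lra.
have dy : d / y <= d by rewrite ler_pdivrMr ?ler_peMr //; lra.
have dx : d / x <= d by rewrite ler_pdivrMr ?ler_peMr //; lra.
rewrite mulrBl in defect; lra.
Qed.

Lemma density_rise_le (R : realFieldType) (d x y x' y' a a' : R) :
  0 < x' <= x -> 0 < y' <= y -> 0 <= d <= 1 ->
  (1 - d) * x <= x' -> (1 - d) * y <= y' -> 0 <= a' <= x' * y' -> a' <= a ->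
  a' / (x' * y') - a / (x * y) <= 2 * d.
Proof.
move=> /andP[x'_gt0 x'_le] /andP[y'_gt0 y'_le] /andP[d_ge0 d_le1] x'_ge y'_ge.
move=> /andP[a'_ge0 a'_le_mul] a'_le.
have x'y'_gt0 : 0 < x' * y' by apply: mulr_gt0.
have xy_gt0 : 0 < x * y by apply: mulr_gt0; lra.
set r := a' / (x' * y'); set s := x' * y' / (x * y).
have r_le1 : r <= 1 by rewrite /r ler_pdivrMr // mul1r.
have r_ge0 : 0 <= r by rewrite /r divr_ge0 // ltW.
have s_le1 : s <= 1 by rewrite /s ler_pdivrMr // mul1r; apply: ler_pM; lra.
have s_ge : (1 - d) ^+ 2 <= s.
  rewrite /s ler_pdivlMr // expr2 mulrACA; apply: ler_pM; nra.
have a'_r : a' / (x * y) = r * s by rewrite /r /s mulrA divfK // gt_eqF.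
have : a' / (x * y) <= a / (x * y) by rewrite ler_pM2r ?invr_gt0.
rewrite a'_r; nra.
Qed.

Lemma density_gap_le (R : realFieldType) (d x y x' y' a a' : R) :
  0 <= d < 1 -> 1 <= x -> 1 <= y -> x' <= x -> y' <= y ->
  (1 - d) * x <= x' -> (1 - d) * y <= y' ->
  0 <= a' <= x' * y' -> a' <= a -> a <= a' + (x - x') + (y - y') ->
  `|a / (x * y) - a' / (x' * y')| <= 2 * d.
Proof.
move=> /andP[d_ge0 d_lt1] x_ge1 y_ge1 x'_le y'_le x'_ge y'_ge a'_bnd a'_le a_le.
have x'_gt0 : 0 < x' by apply: lt_le_trans x'_ge; apply: mulr_gt0; lra.
have y'_gt0 : 0 < y' by apply: lt_le_trans y'_ge; apply: mulr_gt0; lra.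
rewrite ler_norml -lerNl opprB; apply/andP; split.
  by apply: density_rise_le; rewrite ?x'_gt0 ?y'_gt0 ?d_ge0 //=; lra.
have [a'_ge0 _] := andP a'_bnd.
by apply: density_drop_le; rewrite ?x'_gt0 ?y'_gt0 //=; lra.
Qed.

Theorem mainTheorem1 (R : realFieldType) (m n : nat) (A : 'M[bool]_(m, n))
    (no_zero_row : forall i : 'I_m, exists j : 'I_n, A i j)
    (no_zero_col : forall j : 'I_n, exists i : 'I_m, A i j)
    (delta : R) (hd0 : 0 < delta) (hd1 : delta < 1 / 4)
    (X Xs : {set 'I_m}) (Y Ys : {set 'I_n})
    (hX : X != set0) (hY : Y != set0)
    (hXs : Xs \subset X) (hYs : Ys \subset Y)
    (hVX : (Vrow A Xs)%:R / (Vrow A X)%:R >= 1 - delta)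
    (hVY : (Vcol A Ys)%:R / (Vcol A Y)%:R >= 1 - delta) :
  `| dens R A X Y - dens R A Xs Ys | <= 4 * delta.
Proof.
have VX_gt0 := Vrow_gt0 no_zero_row hX; have VY_gt0 := Vcol_gt0 no_zero_col hY.
rewrite ler_pdivlMr ?ltr0n // in hVX; rewrite ler_pdivlMr ?ltr0n // in hVY.
apply: le_trans (_ : 2 * delta <= _); last by lra.
apply: density_gap_le => //.
- by apply/andP; split; lra.
- by rewrite ler1n.
- by rewrite ler1n.
- by rewrite ler_nat (Vrow_setD _ hXs) leq_addr.
- by rewrite ler_nat (Vcol_setD _ hYs) leq_addr.
- by rewrite ler0n -natrM ler_nat aXY_le_mulV.
- by rewrite ler_nat aXY_subset.
- have := aXY_le_setD A hXs hYs; rewrite -(ler_nat R) !natrD.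
  by rewrite (Vrow_setD _ hXs) (Vcol_setD _ hYs) !natrD; lra.
Qed.
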